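(* Let $n\ge 1$ and define $A_n^{(\mathsf{cyc}^*-\mathsf{fix}^*,\mathsf{exc})}(q,t)=\sum_{\sigma\in\mathfrak{S}_n}q^{(\mathsf{cyc}^*-\mathsf{fix}^* )\sigma}t^{\mathsf{exc}\,\sigma}$. Then $$A_{n}^{(\mathsf{cyc}^*-\mathsf{fix}^*, \mathsf{exc})}(q, t)=\left(\frac{1+xt}{1+x}\right)^{n-1}P^{(\mathsf{cyc}^*-\mathsf{fix}^*, \mathsf{cpk}^*,\mathsf{exc})}\left(\mathfrak{S}_n; q, \frac{(1+x)^{2}t}{(x+t)(1+xt)},\frac{x+t}{1+xt}\right),$$ equivalently, $$P^{(\mathsf{cyc}^*-\mathsf{fix}^*, \mathsf{cpk}^*,\mathsf{exc})}(\mathfrak{S}_n; q, x,t)=\left(\frac{1+u}{1+uv}\right)^{n-1}A_{n}^{(\mathsf{cyc}^*-\mathsf{fix}^*,\mathsf{exc})}(q, v),$$ where $u=\frac{1+t^{2}-2xt-(1-t)\sqrt{(1+t)^{2}-4xt}}{2(1-x)t}$ and $v=\frac{(1+t)^{2}-2xt-(1+t)\sqrt{(1+t)^{2}-4xt}}{2xt}$.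
   Context: $\mathfrak{S}_n$ is the set of permutations of $[n]$. $P^{(\mathsf{stat}_1,\ldots,\mathsf{stat}_m)}(\Omega;t_1,\ldots,t_m)=\sum_{\sigma\in\Omega}\prod_j t_j^{\mathsf{stat}_j\sigma}$. For $\sigma\in\mathfrak{S}_n$, $\mathsf{exc}\,\sigma=\#\{i:\sigma(i)>i\}$. The star companion $\sigma^*$ is the permutation of $\{0,\dots,n\}$ with $\sigma^*(0)=n$, $\sigma^*(i)=\sigma(i)-1$ for $i\in[n]$. $\mathsf{cyc}^*\sigma$ is the number of cycles of $\sigma^*$; $\mathsf{fix}^*\sigma=\#\{i\in[n-1]:\sigma^*(i)=i\}$; $\mathsf{cpk}^*\sigma=\#\{i\in[n-1]:(\sigma^* )^{-1}(i)<i>\sigma^*(i)\}$. *)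

From HB Require Import structures.
From mathcomp Require Import all_boot all_order fingroup perm all_algebra.
Set Implicit Arguments. Unset Strict Implicit. Unset Printing Implicit Defensive.
Import Order.TTheory GRing.Theory Num.Theory.

(* Permutations of [n] = {1..n} are represented 0-based as s : 'S_n
   (s i = sigma (i+1) - 1).  The set {0..n} is 'I_n.+1. *)

(* sigma^* : sigma^*(0) = n, sigma^*(i) = sigma(i) - 1 for i in [n].
   With j = i+1 in 'I_n.+1 (j <> 0), sigma^*(j) = sigma(i+1) - 1 = s i. *)
Definition star_fun n (s : 'S_n) (j : 'I_n.+1) : 'I_n.+1 :=
  if unlift ord0 j is Some i then widen_ord (leqnSn n) (s i) else ord_max.

Lemma star_fun_inj n (s : 'S_n) : injective (star_fun s).
Proof.
move=> j k; rewrite /star_fun.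
case: unliftP => [i ->|->]; case: unliftP => [i' ->|->] //.
- by move=> /(congr1 val) /= /val_inj /perm_inj ->.
- by move=> /(congr1 val) /= Hi; move: (ltn_ord (s i)); rewrite Hi ltnn.
- by move=> /(congr1 val) /= Hi; move: (ltn_ord (s i')); rewrite -Hi ltnn.
Qed.

Definition star n (s : 'S_n) : {perm 'I_n.+1} := perm (@star_fun_inj n s).

Definition exc n (s : 'S_n) : nat := #|[set i : 'I_n | val i < val (s i)]|.

Definition cycstar n (s : 'S_n) : nat := #|porbits (star s)|.

Definition fixstar n (s : 'S_n) : nat :=
  #|[set i : 'I_n.+1 | [&& 0 < val i, val i < n & star s i == i]]|.

Definition cpkstar n (s : 'S_n) : nat :=
  #|[set i : 'I_n.+1 | [&& 0 < val i, val i < n, val ((star s)^-1%g i) < val i & val (star s i) < val i]]|.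

(* cyc^* - fix^* (always >= 0, since every fixed point counted by fix^* is
   its own cycle of sigma^* ) *)
Definition cycfix n (s : 'S_n) : nat := cycstar s - fixstar s.

Local Open Scope ring_scope.

Definition Acf (R : comNzRingType) n (q t : R) : R :=
  \sum_(s : 'S_n) q ^+ cycfix s * t ^+ exc s.

Definition Pccx (R : comNzRingType) n (q x t : R) : R :=
  \sum_(s : 'S_n) q ^+ cycfix s * x ^+ cpkstar s * t ^+ exc s.

(* Sort the letters 1, ..., n - 1 of sigma^* by their cyclic type (peak,
   valley, double ascent, double descent, fixed point), read off from their
   predecessor and successor in their cycle.  Growing sigma from S_n to
   S_(n+1) inserts the new letter n into sigma^* right after some letter, or
   as a new fixed point, and changes these five counts in a controlled way:
   sums over S_(n+1) of a weight F(cyc^* - fix^*, counts) are sums over S_n of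
   an explicit linear operator applied to F.  This operator commutes with the
   derivation F |-> a F(a-1) - d F(d-1) + f F(f-1), which vanishes on S_1, so
   the sum of q^c y^k z^v (t+h)^a (s-h)^d (r+h)^f over S_n does not depend on h.
   The same recurrence shows that peaks and valleys are equinumerous and that
   the five counts add up to n - 1; since cpk^* counts peaks and exc counts
   valleys, double ascents and fixed points, a rescaling followed by a shift
   of h carries P(S_n; q, x, t) to A_n(q, .) up to the factor in the
   statement.  The parameters u and v solve the resulting algebraic
   equations. *)

From HB Require Import structures.
From mathcomp Require Import all_boot all_order fingroup perm all_algebra.
From mathcomp Require Import zify ring.
Import Order.TTheory GRing.Theory Num.Theory.
Set Implicit Arguments. Unset Strict Implicit. Unset Printing Implicit Defensive.

(** * Cyclic types of letters *)

Notation Peak := 0%N (only parsing).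
Notation Valley := 1%N (only parsing).
Notation DAsc := 2%N (only parsing).
Notation DDesc := 3%N (only parsing).
Notation Fixed := 4%N (only parsing).

(* The cyclic type of a letter i whose predecessor and successor in its cycle
   are p and s. *)
Definition ctype (p i s : nat) : nat :=
  if s == i then Fixed
  else if p < i then (if s < i then Peak else DAsc)
  else (if s < i then DDesc else Valley).

Lemma ctype_peak p i s : (ctype p i s == Peak) = (p < i) && (s < i).
Proof. by rewrite /ctype; repeat case: ifP; lia. Qed.

Lemma ctype_fixed p i s : (ctype p i s == Fixed) = (s == i).
Proof. by rewrite /ctype; repeat case: ifP; lia. Qed.

Lemma ctype_exc p i s :
  (i <= s) = (ctype p i s == Valley) + (ctype p i s == DAsc) + (ctype p i s == Fixed) :> nat.
Proof. by rewrite /ctype; repeat case: ifP; lia. Qed.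

Lemma ctype_eq_pred p p' i s : (p < i) = (p' < i) -> ctype p i s = ctype p' i s.
Proof. by rewrite /ctype => ->. Qed.

Lemma ctype_eq_succ p i s s' :
  (s == i) = (s' == i) -> (s < i) = (s' < i) -> ctype p i s = ctype p i s'.
Proof. by rewrite /ctype => -> ->. Qed.

Definition nctype (P S : nat -> nat) (N T : nat) : nat :=
  \sum_(1 <= i < N) (ctype (P i) i (S i) == T).

Lemma big_nat_update (lo hi x : nat) (g g' : nat -> nat) :
  (forall i, lo <= i < hi -> i != x -> g' i = g i) -> lo <= x < hi ->
  \sum_(lo <= i < hi) g' i + g x = \sum_(lo <= i < hi) g i + g' x.
Proof.
move=> eq_gg' /andP[lo_x x_hi].
rewrite !(@big_cat_nat _ _ _ x lo hi) //= ?(ltnW x_hi) //.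
rewrite !(@big_cat_nat _ _ _ x.+1 x hi) //= !big_nat1.
rewrite (@eq_big_nat _ _ _ lo x g' g); last by move=> i Hi; apply: eq_gg'; lia.
rewrite (@eq_big_nat _ _ _ x.+1 hi g' g); last by move=> i Hi; apply: eq_gg'; lia.
lia.
Qed.

Lemma sum_nat_cond_range (m lo hi : nat) (Q : nat -> bool) : hi <= m ->
  \sum_(0 <= i < m) ((lo <= i < hi) && Q i) = \sum_(lo <= i < hi) Q i.
Proof.
move=> hi_m; case: (leqP hi lo) => hi_lo.
  rewrite [RHS]big_geq // big1_seq // => i /andP[_]; rewrite mem_iota; lia.
rewrite (@big_cat_nat _ _ _ lo 0 m) //=; last by lia.
rewrite (@big_cat_nat _ _ _ hi lo m) //=; last by lia.
rewrite big1_seq; last by move=> i /andP[_]; rewrite mem_iota; lia.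
rewrite [X in _ + (_ + X)]big1_seq; last by move=> i /andP[_]; rewrite mem_iota; lia.
rewrite add0n addn0; apply: eq_big_nat => i Hi.
by have -> : (lo <= i < hi) = true by lia.
Qed.

Lemma card_ord_pred (m : nat) (Q : nat -> bool) :
  #|[set i : 'I_m | Q i]| = \sum_(0 <= i < m) Q i.
Proof.
rewrite -sum1_card big_mkcond /= big_mkord; apply: eq_bigr => i _.
by rewrite inE; case: (Q i).
Qed.

Lemma bumpE n x : bump n x = if n <= x then x.+1 else x.
Proof. by rewrite /bump; case: leqP. Qed.

Lemma unbumpE n x : unbump n x = if n < x then x.-1 else x.
Proof. by rewrite /unbump; case: ltnP => /= _; rewrite ?subn1 ?subn0. Qed.

Lemma bump_lt n x i : i < n -> (bump n x < i) = (x < i).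
Proof. by rewrite bumpE; case: ifP => H Hi; lia. Qed.

Lemma bump_neq n x : bump n x != n.
Proof. by rewrite bumpE; case: ifP => H; lia. Qed.

(** * Inserting a letter into a permutation of {0, ..., n} *)

(* S and P are mutually inverse permutations of {0, ..., n} with S 0 = n (the
   successor and predecessor maps of a star companion).  The new letter, which
   receives the label n while the old n becomes n + 1, is inserted right after
   the letter j; for j = n it forms a new fixed point.  All lemmas take all
   section hypotheses, so that their argument lists outside are uniform. *)
Section InsertLetter.
Local Set Default Proof Using "All".
Variables (n : nat) (S P : nat -> nat).
Hypothesis n_gt0 : 0 < n.
Hypothesis PK : forall i, i <= n -> S (P i) = i.
Hypothesis SK : forall i, i <= n -> P (S i) = i.
Hypothesis S_le : forall i, i <= n -> S i <= n.
Hypothesis P_le : forall i, i <= n -> P i <= n.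
Hypothesis S0 : S 0 = n.
Definition Shat x := if x == n then n else bump n (S (unbump n x)).
Definition Phat x := if x == n then n else bump n (P (unbump n x)).

Lemma P_n : P n = 0.
Proof. by rewrite -S0 SK. Qed.

Lemma S_lt i : 1 <= i <= n -> S i < n.
Proof.
move=> Hi; have := S_le (i := i); case: (eqVneq (S i) n) => [E|]; last by lia.
by have := SK (i := i); rewrite E P_n; lia.
Qed.

Lemma P_gt0 i : i < n -> 0 < P i.
Proof. by move=> Hi; case E: (P i) => //; have := PK (i := i); rewrite E S0; lia. Qed.

Variable j : nat.
Hypothesis j_range : 1 <= j <= n.+1.

Definition S' i := Shat (if i == j then n else if i == n then j else i).
Definition P' i := let y := Phat i in if y == j then n else if y == n then j else y.

Definition cty i := ctype (P i) i (S i).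
Definition cty' i := ctype (P' i) i (S' i).

Lemma S'_mid i : 1 <= i < n -> S' i = if i == j then n else S i.
Proof.
move=> Hi; rewrite /S'; case: (eqVneq i j) => [_|_]; first by rewrite /Shat !eqxx.
have i_neq_n : (i == n) = false by lia.
rewrite i_neq_n /Shat i_neq_n.
have -> : unbump n i = i by rewrite unbumpE; case: ifP => H; lia.
by have := S_lt (i := i); rewrite bumpE; case: ifP => H; lia.
Qed.

Lemma P'_mid i : 1 <= i < n ->
  P' i = if bump n (P i) == j then n else bump n (P i).
Proof.
move=> Hi; rewrite /P' /Phat (_ : (i == n) = false); last by lia.
have -> : unbump n i = i by rewrite unbumpE; case: ifP => H; lia.
by case: eqP => //; rewrite (negbTE (bump_neq _ _)).
Qed.

Lemma S'_n : S' n = Shat j.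
Proof. by rewrite /S' eqxx; case: eqP => // ->. Qed.

Lemma P'_n : P' n = j.
Proof. by rewrite /P' /Phat eqxx; case: (eqVneq n j) => [->|]; rewrite ?eqxx. Qed.

Lemma nctype'_split T :
  nctype P' S' n.+1 T = \sum_(1 <= i < n) (cty' i == T) + (ctype j n (Shat j) == T).
Proof. by rewrite /nctype big_nat_recr /= ?P'_n ?S'_n //; apply: ltnW. Qed.

Lemma cty'_mid i : 1 <= i < n ->
  cty' i = if i == j then ctype (P i) i n
           else if (j < n) && (i == S j) then ctype n i (S i) else cty i.
Proof.
move=> Hi; rewrite /cty' S'_mid // P'_mid //.
have := P_gt0 (i := i); have := P_le (i := i).
case: (eqVneq i j) => [<-|Nij] P_hi P_lo.
  apply: ctype_eq_pred; case: eqP => [E|_]; last by rewrite bump_lt //; lia.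
  have -> : P i = i by move: E; rewrite bumpE; case: ifP => H; lia.
  by rewrite ltnn; lia.
case: eqP => [E|NE].
  case: (ltnP j n) => Hj /=.
    have <- : P i = j by move: E; rewrite bumpE; case: ifP => H; lia.
    by rewrite PK ?eqxx //; lia.
  by apply: ctype_eq_pred; move: E; rewrite bumpE; case: ifP => H; lia.
have -> : (j < n) && (i == S j) = false.
  apply/negP => /andP[Hj /eqP Ei]; apply: NE.
  by rewrite Ei SK ?bumpE; [case: ifP => H; lia | lia].
by apply: ctype_eq_pred; rewrite bump_lt //; lia.
Qed.

Lemma cty'_mid_last : n <= j -> forall i, 1 <= i < n -> cty' i = cty i.
Proof.
move=> Hj i Hi; rewrite cty'_mid // (_ : (i == j) = false); last by lia.
by rewrite (_ : (j < n) = false); last by lia.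
Qed.

Lemma nctype'_new_fixed : j = n -> forall T,
  nctype P' S' n.+1 T = nctype P S n T + (T == Fixed).
Proof.
move=> Hj T; rewrite nctype'_split /nctype.
rewrite (@eq_big_nat _ 0 addn 1 n _ (fun i => cty i == T)); last first.
  by move=> i Hi; rewrite cty'_mid_last //; lia.
by rewrite Hj /Shat eqxx /ctype eqxx eq_sym.
Qed.

Lemma nctype'_after_last : j = n.+1 -> forall T,
  nctype P' S' n.+1 T = nctype P S n T + (T == DDesc).
Proof.
move=> Hj T; rewrite nctype'_split /nctype.
rewrite (@eq_big_nat _ 0 addn 1 n _ (fun i => cty i == T)); last first.
  by move=> i Hi; rewrite cty'_mid_last //; lia.
have Sn : S n < n by apply: S_lt; lia.
rewrite Hj /Shat (_ : (n.+1 == n) = false); last by lia.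
have -> : unbump n n.+1 = n by rewrite unbumpE ltnSn.
have -> : bump n (S n) = S n by rewrite bumpE; case: ifP => H; lia.
rewrite /ctype (_ : (S n == n) = false); last by lia.
by rewrite (_ : (n.+1 < n) = false) ?Sn /= 1?eq_sym //; lia.
Qed.

(* The only old letter in 1, ..., n - 1 whose type can change: j itself if
   S j <= j, otherwise S j, whose predecessor becomes n. *)
Definition jmoved := if j < S j then S j else j.

Lemma jmoved_range : 1 <= j < n -> 1 <= jmoved < n.
Proof. by move=> Hj; rewrite /jmoved; case: ifP => // H; have := S_lt (i := j); lia. Qed.

Lemma cty'_mid_inner : 1 <= j < n ->
  forall i, 1 <= i < n -> i != jmoved -> cty' i = cty i.
Proof.
move=> Hj i Hi Hx; rewrite cty'_mid //; case: eqP => [Eij|Nij].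
  subst i; move: Hx; rewrite /jmoved; case: ifP => H Hx; last by rewrite eqxx in Hx.
  by have := S_lt (i := j); move=> Sj; apply: ctype_eq_succ; lia.
rewrite (_ : j < n); last by lia.
case: eqP => [Ei|] //=; apply: ctype_eq_pred.
have -> : P i = j by rewrite Ei SK //; lia.
by move: Hx; rewrite /jmoved Ei; case: ifP => H Hx; [rewrite eqxx in Hx | lia].
Qed.

Lemma nctype'_inner : 1 <= j < n -> forall T,
  nctype P' S' n.+1 T + (cty jmoved == T) = nctype P S n T + (cty' jmoved == T) + (Peak == T).
Proof.
move=> Hj T; rewrite nctype'_split /nctype -addnA [X in _ + X]addnC addnA.
rewrite (@big_nat_update 1 n jmoved (fun i => cty i == T) (fun i => cty' i == T)).
- congr (_ + _); have Sj : S j < n by apply: S_lt; lia.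
  rewrite /Shat (_ : (j == n) = false); last by lia.
  have -> : unbump n j = j by rewrite unbumpE; case: ifP => H; lia.
  have -> : bump n (S j) = S j by rewrite bumpE; case: ifP => H; lia.
  rewrite /ctype (_ : (S j == n) = false); last by lia.
  by rewrite (_ : j < n) ?Sj 1?eq_sym //; lia.
- by move=> i Hi Hx /=; rewrite cty'_mid_inner.
- exact: jmoved_range.
Qed.

Lemma cty_insert_fixed : 1 <= j < n -> S j = j -> cty jmoved = Fixed /\ cty' jmoved = Valley.
Proof.
move=> Hj E; rewrite /jmoved E ltnn; split; first by rewrite /cty /ctype E eqxx.
rewrite cty'_mid ?eqxx // (_ : P j = j); last by rewrite -{1}E SK //; lia.
rewrite /ctype ltnn (_ : (n == j) = false); last by lia.
by rewrite (_ : (n < j) = false) //; lia.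
Qed.

Lemma cty_insert_desc : 1 <= j < n -> S j < j ->
  [/\ jmoved = j, cty j = (if P j < j then Peak else DDesc)
                & cty' j = (if P j < j then DAsc else Valley)].
Proof.
move=> Hj E; rewrite /jmoved (_ : (j < S j) = false); last by lia.
split => //.
  rewrite /cty /ctype (_ : (S j == j) = false); last by lia.
  by rewrite E.
rewrite cty'_mid ?eqxx // /ctype (_ : (n == j) = false); last by lia.
rewrite (_ : (n < j) = false); last by lia.
have : P j != j by apply/eqP => E2; have := PK (i := j); rewrite E2; lia.
by case: ltngtP.
Qed.

Lemma cty_insert_asc : 1 <= j < n -> j < S j ->
  [/\ jmoved = S j, 1 <= S j < n, P (S j) = j,
     cty (S j) = (if S (S j) < S j then Peak else DAsc) &
     cty' (S j) = (if S (S j) < S j then DDesc else Valley)].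
Proof.
move=> Hj E; have Sj : S j < n by apply: S_lt; lia.
have PSj : P (S j) = j by rewrite SK //; lia.
have SSj : (S (S j) == S j) = false.
  by apply/negP => /eqP E2; have := SK (i := S j); rewrite E2 PSj; lia.
rewrite /jmoved E; split => //; first by lia.
  by rewrite /cty /ctype PSj SSj E.
rewrite cty'_mid; last by lia.
rewrite (_ : (S j == j) = false); last by lia.
rewrite (_ : j < n) ?eqxx /= /ctype ?SSj; last by lia.
by rewrite (_ : (n < S j) = false) //; lia.
Qed.

End InsertLetter.

Definition pext m (p : {perm 'I_m}) (x : nat) : nat :=
  if insub x is Some i then val (p i) else x.

Lemma pextE m (p : {perm 'I_m}) (i : 'I_m) : pext p i = p i.
Proof. by rewrite /pext valK. Qed.

Lemma pext_out m (p : {perm 'I_m}) x : m <= x -> pext p x = x.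
Proof. by move=> H; rewrite /pext insubF // ltnNge H. Qed.

Lemma pext_lt m (p : {perm 'I_m}) x : x < m -> pext p x < m.
Proof. by move=> H; rewrite -[x]/(nat_of_ord (Ordinal H)) pextE. Qed.

Lemma pextM m (a b : {perm 'I_m}) x : pext (a * b) x = pext b (pext a x).
Proof.
case: (ltnP x m) => H; last by rewrite !pext_out.
by rewrite -[x]/(nat_of_ord (Ordinal H)) !pextE permM.
Qed.

Lemma pext1 m x : pext (1 : {perm 'I_m}) x = x.
Proof. by rewrite /pext; case: insubP => // i _ <-; rewrite perm1. Qed.

Lemma pextKV m (p : {perm 'I_m}) x : pext p (pext p^-1 x) = x.
Proof. by rewrite -pextM mulVg pext1. Qed.

Lemma pextK m (p : {perm 'I_m}) x : pext p^-1 (pext p x) = x.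
Proof. by rewrite -pextM mulgV pext1. Qed.

Lemma pext_inj m (p q : {perm 'I_m}) : (forall x, x < m -> pext p x = pext q x) -> p = q.
Proof. by move=> H; apply/permP => i; apply: val_inj; have := H i (ltn_ord i); rewrite !pextE. Qed.

Lemma pext_tperm m (u v : 'I_m) x :
  pext (tperm u v) x = if x == u then nat_of_ord v else if x == v then nat_of_ord u else x.
Proof.
case: (ltnP x m) => H; last first.
  rewrite pext_out // (_ : (x == u) = false); last by have := ltn_ord u; lia.
  by rewrite (_ : (x == v) = false) //; have := ltn_ord v; lia.
rewrite -[x]/(nat_of_ord (Ordinal H)) pextE.
case: tpermP => [->|->|a b]; rewrite ?eqxx //=; first by case: eqP.
rewrite (_ : (x == u) = false); last by apply/eqP => E; apply: a; apply: val_inj.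
by rewrite (_ : (x == v) = false) //; apply/eqP => E; apply: b; apply: val_inj.
Qed.

Lemma pext_lift_perm m (i : 'I_m.+1) (p : {perm 'I_m}) x :
  pext (lift_perm i i p) x = if x == i then nat_of_ord i else bump i (pext p (unbump i x)).
Proof.
case: (ltnP x m.+1) => H; last first.
  have Hi := ltn_ord i.
  have -> : unbump i x = x.-1 by rewrite unbumpE; case: ifP; lia.
  rewrite pext_out // pext_out; last by lia.
  by rewrite (_ : (x == i) = false) ?bumpE; [case: ifP; lia | lia].
rewrite -[x]/(nat_of_ord (Ordinal H)) pextE.
case: (unliftP i (Ordinal H)) => [k|] ->; last by rewrite lift_perm_id eqxx.
rewrite lift_perm_lift (_ : (nat_of_ord (lift i k) == i) = false).
  by rewrite /= bumpK pextE.
by apply/negbTE; rewrite val_eqE eq_sym; exact: neq_lift.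
Qed.

Lemma pext_star n (s : 'S_n) x :
  pext (star s) x = if x == 0 then n else if x <= n then pext s x.-1 else x.
Proof.
case: (ltnP x n.+1) => H; last first.
  rewrite pext_out // (_ : (x == 0) = false); last by lia.
  by rewrite (_ : (x <= n) = false) //; lia.
rewrite -[x]/(nat_of_ord (Ordinal H)) pextE /star permE /star_fun.
case: (unliftP ord0 (Ordinal H)) => [k|] -> //=.
by rewrite /bump /= add1n ltn_ord pextE.
Qed.

(* [ins] is a bijection 'S_n * 'I_n.+1 -> 'S_n.+1 (lemma [sum_ins]); by
   [star_ins] it inserts the new letter n into the star companion right after
   the letter [ins_pos n j], as a new fixed point when [ins_pos n j = n]. *)
Definition ins n (s : 'S_n) (j : 'I_n.+1) : 'S_n.+1 :=
  tperm (inord n.-1) ord_max * tperm j ord_max * lift_perm ord_max ord_max s.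

Definition ins_pos n (j : nat) :=
  if j < n.-1 then j.+1 else if j == n.-1 then n.+1 else n.

Definition ins_star n (p : {perm 'I_n.+1}) (j : 'I_n.+2) : {perm 'I_n.+2} :=
  tperm j (inord n) * lift_perm (inord n) (inord n) p.

Lemma ins_pos_le n j : j <= n -> ins_pos n j <= n.+1.
Proof. by rewrite /ins_pos; case: ifP => H; [|case: ifP => H']; lia. Qed.

Ltac decide_if := match goal with |- context [if ?b then _ else _] =>
  first [ rewrite (_ : b = true); last by lia
        | rewrite (_ : b = false); last by lia ] end.

Definition star_ins_nat n (f : nat -> nat) (j x : nat) : nat :=
  let t y := if y == n.-1 then n else if y == n then n.-1 else y in
  let t' y := if y == j then n else if y == n then j else y in
  let f' z := if z == n then n else bump n (f (unbump n z)) in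
  if x == 0 then n.+1 else if x <= n.+1 then f' (t' (t x.-1)) else x.

Definition ins_star_nat n (f : nat -> nat) (k x : nat) : nat :=
  let t y := if y == k then n else if y == n then k else y in
  let fs w := if w == 0 then n else if w <= n then f w.-1 else w in
  let fs' z := if z == n then n else bump n (fs (unbump n z)) in
  fs' (t x).

Lemma star_ins_natE n (f : nat -> nat) j x : 0 < n -> j <= n -> x < n.+2 ->
  (forall y, y < n -> f y < n) -> star_ins_nat n f j x = ins_star_nat n f (ins_pos n j) x.
Proof.
move=> n0 jn xn fb; rewrite /star_ins_nat /ins_star_nat /ins_pos !bumpE !unbumpE.
have fb' y : y < n -> (n <= f y) = false by move/fb; lia.
have key a b : a = b -> f a = f b by move->.
case: (ltnP j n.-1) => Hj; [| case: (eqVneq j n.-1) => Hj2];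
case: (eqVneq x 0) => x0; case: (eqVneq x j.+1) => xj;
case: (eqVneq x n) => xn'; case: (eqVneq x n.+1) => xn1;
  repeat decide_if; rewrite ?fb' //; repeat decide_if; try lia; try (apply: key; lia).
Qed.

Lemma star_ins n (s : 'S_n) (j : 'I_n.+1) : 0 < n ->
  star (ins s j) = ins_star (star s) (inord (ins_pos n j)).
Proof.
move=> n0; apply: pext_inj => x Hx.
have jn : j <= n by have := ltn_ord j; lia.
transitivity (star_ins_nat n (pext s) j x).
  by rewrite pext_star /star_ins_nat /ins !pextM !pext_tperm pext_lift_perm /= inordK //; lia.
transitivity (ins_star_nat n (pext s) (ins_pos n j) x); last first.
  rewrite /ins_star_nat /ins_star pextM pext_tperm pext_lift_perm.
  by rewrite !inordK ?ltnS ?ins_pos_le // pext_star.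
by apply: star_ins_natE => // y Hy; exact: pext_lt.
Qed.

Definition tcount n (s : 'S_n) (T : nat) : nat :=
  nctype (pext (star s)^-1%g) (pext (star s)) n T.

Lemma card_ctype n (s : 'S_n) T (Q : nat -> nat -> nat -> bool) :
  (forall p i q, Q p i q = (ctype p i q == T)) ->
  #|[set i : 'I_n.+1 | (0 < val i) && (val i < n)
                      && Q (val ((star s)^-1%g i)) i (val (star s i))]| = tcount s T.
Proof.
move=> QE; pose Q' x := (1 <= x < n)
  && (ctype (pext (star s)^-1%g x) x (pext (star s) x) == T).
rewrite (eq_card (B := [set i : 'I_n.+1 | Q' i])); last first.
  by move=> i; rewrite !inE /Q' !pextE QE.
by rewrite card_ord_pred sum_nat_cond_range.
Qed.

Lemma cpkstar_tcount n (s : 'S_n) : cpkstar s = tcount s Peak.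
Proof.
rewrite /cpkstar -(@card_ctype _ _ _ (fun p i q => (p < i) && (q < i))).
  by apply: eq_card => i; rewrite !inE !andbA.
by move=> *; rewrite ctype_peak.
Qed.

Lemma fixstar_tcount n (s : 'S_n) : fixstar s = tcount s Fixed.
Proof.
rewrite /fixstar -(@card_ctype _ _ _ (fun p i q => q == i)).
  by apply: eq_card => i; rewrite !inE !andbA -val_eqE.
by move=> *; rewrite ctype_fixed.
Qed.

(* sigma(i) > i iff sigma^*(i) >= i; the letter n is never counted, as
   sigma^*(n) < n. *)
Lemma exc_tcount n (s : 'S_n) : 0 < n ->
  exc s = tcount s Valley + tcount s DAsc + tcount s Fixed.
Proof.
move=> n0; rewrite /exc (eq_card (B := [set i : 'I_n | i < pext s i])); last first.
  by move=> i; rewrite !inE pextE.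
rewrite (@card_ord_pred _ (fun x => x < pext s x)).
transitivity (\sum_(1 <= i < n.+1) (i <= pext (star s) i)).
  rewrite big_add1 /=; apply: eq_big_nat => i Hi; rewrite pext_star.
  by rewrite (_ : i < n).
rewrite big_nat_recr /=; last by lia.
rewrite (_ : (n <= pext (star s) n) = false); last first.
  rewrite pext_star (_ : (n == 0) = false); last by lia.
  by rewrite leqnn; have := @pext_lt _ s n.-1; lia.
rewrite addn0 /tcount /nctype -!big_split /=.
by apply: eq_big_nat => i Hi; rewrite (ctype_exc (pext (star s)^-1%g i)).
Qed.

Lemma porbit_fixed (T : finType) (s : {perm T}) x : s x = x -> porbit s x = [set x].
Proof.
move=> sx; apply/setP => y; rewrite inE; apply/porbitP/eqP => [[k ->]|->].
  by elim: k => [|k IH]; rewrite ?expg0 ?perm1 // expgSr permM IH sx.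
by exists 0; rewrite expg0 perm1.
Qed.

Section LiftPermCycles.
Variables (m : nat) (i : 'I_m.+1) (p : {perm 'I_m}).
Local Notation L := (lift_perm i i p).

Lemma lift_permX k x : (L ^+ k)%g (lift i x) = lift i ((p ^+ k)%g x).
Proof.
elim: k => [|k IH]; first by rewrite !expg0 !perm1.
by rewrite !expgSr !permM IH lift_perm_lift.
Qed.

Lemma porbit_lift_perm x : porbit L (lift i x) = [set lift i y | y in porbit p x].
Proof.
apply/setP => z; apply/porbitP/imsetP.
  by case=> k ->; exists ((p ^+ k)%g x); [apply: mem_porbit | rewrite lift_permX].
by case=> y /porbitP[k ->] ->; exists k; rewrite lift_permX.
Qed.

Lemma card_porbits_lift_perm : #|porbits L| = #|porbits p|.+1.
Proof.
pose liftS (P : {set 'I_m}) := [set lift i y | y in P].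
have Li : porbit L i = [set i] by rewrite porbit_fixed // lift_perm_id.
have -> : porbits L = [set i] |: liftS @: porbits p.
  apply/setP => C; rewrite !inE; apply/imsetP/orP.
    case=> y _ ->; case: (unliftP i y) => [x|] ->; last by left; rewrite Li.
    right; apply/imsetP; exists (porbit p x); first exact: imset_f.
    by rewrite porbit_lift_perm.
  case=> [/eqP -> | /imsetP [P /imsetP[x _ ->] ->]]; first by exists i.
  by exists (lift i x) => //; rewrite porbit_lift_perm.
rewrite cardsU1 card_imset; last by apply: imset_inj; apply: lift_inj.
suff -> : [set i] \notin liftS @: porbits p by rewrite add1n.
apply/imsetP => -[P /imsetP[x _ ->] E].
have : i \in [set i] := set11 i.
by rewrite E => /imsetP[y _] E3; move: (neq_lift i y); rewrite -E3 eqxx.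
Qed.

End LiftPermCycles.

Lemma cycstar_ins n (s : 'S_n) (j : 'I_n.+1) : 0 < n ->
  cycstar (ins s j) = cycstar s + (ins_pos n j == n).
Proof.
move=> n0; rewrite /cycstar star_ins // /ins_star.
set k : 'I_n.+2 := inord (ins_pos n j).
have := porbits_mul_tperm (lift_perm (inord n) (inord n) (star s)) k (inord n).
rewrite card_porbits_lift_perm porbit_fixed ?lift_perm_id // inE.
have -> : (k == inord n) = (ins_pos n j == n).
  by rewrite -val_eqE /k /= !inordK // ltnS ins_pos_le //; have := ltn_ord j; lia.
(* The two cardinals of [porbits] agree only up to conversion, invisible to [lia]. *)
set X := #|porbits (_ * _)|.
by rewrite -muln2; case: eqP => _ /=; match goal with
  |- ?A + _ = _ -> _ => have -> : X = A by [] end; lia.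
Qed.

Lemma fixstar_le_cycstar n (s : 'S_n) : fixstar s <= cycstar s.
Proof.
rewrite /fixstar /cycstar; set F := [set i | _].
have -> : #|F| = #|porbit (star s) @: F|.
  rewrite card_in_imset // => x y; rewrite !inE => /and3P[_ _ /eqP Hx] _ E.
  have : y \in porbit (star s) x by rewrite E porbit_id.
  by rewrite porbit_fixed // inE => /eqP.
by apply: subset_leq_card; apply/subsetP => C /imsetP[x _ ->]; apply: imset_f.
Qed.

(** * The insertion recurrence *)

Definition statw (V : Type) (F : nat -> nat -> nat -> nat -> nat -> nat -> V) n (s : 'S_n) : V :=
  F (cycfix s) (tcount s Peak) (tcount s Valley) (tcount s DAsc) (tcount s DDesc) (tcount s Fixed).

(* The operator of the recurrence: summing the weights of the n + 1 ways of
   growing a permutation with statistics (c, k, v, a, d, f) gives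
   [ins_op F c k v a d f]. *)
Definition ins_op (V : nmodType) (F : nat -> nat -> nat -> nat -> nat -> nat -> V)
  (c k v a d f : nat) : V :=
  (F c k v a d f.+1 + F c k v a d.+1 f *+ k.+1 + F c k v a.+1 d f *+ k
  + F c k.+1 v.+1 a.-1 d f *+ a + F c k.+1 v.+1 a d.-1 f *+ d
  + F c.+1 k.+1 v.+1 a d f.-1 *+ f)%R.

Section InsertionRecurrence.
Variables (n : nat) (s : 'S_n).
Hypothesis n_gt0 : 0 < n.
Local Notation S := (pext (star s)).
Local Notation P := (pext (star s)^-1%g).

Lemma star_PK i : i <= n -> S (P i) = i. Proof. by rewrite pextKV. Qed.
Lemma star_SK i : i <= n -> P (S i) = i. Proof. by rewrite pextK. Qed.
Lemma star_S_le i : i <= n -> S i <= n. Proof. by move=> H; rewrite -ltnS pext_lt. Qed.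
Lemma star_P_le i : i <= n -> P i <= n. Proof. by move=> H; rewrite -ltnS pext_lt. Qed.
Lemma star_S0 : S 0 = n. Proof. by rewrite pext_star. Qed.

Lemma tcount_ins (j : 'I_n.+1) T :
  tcount (ins s j) T = nctype (P' n P (ins_pos n j)) (S' n S (ins_pos n j)) n.+1 T.
Proof.
rewrite /tcount star_ins // /nctype; apply: eq_big_nat => i Hi.
have Ej : nat_of_ord (inord (ins_pos n j) : 'I_n.+2) = ins_pos n j.
  by rewrite inordK // ltnS ins_pos_le // -ltnS.
have En : nat_of_ord (inord n : 'I_n.+2) = n by rewrite inordK.
congr (ctype _ _ _ == T).
  by rewrite /ins_star invMg lift_permV tpermV pextM pext_lift_perm pext_tperm Ej En.
by rewrite /ins_star pextM pext_lift_perm pext_tperm Ej En.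
Qed.

Section Weight.
Variables (V : Type) (F : nat -> nat -> nat -> nat -> nat -> nat -> V).

(* The weight of [ins s j] when the new letter follows the letter j of the
   star companion. *)
Definition ins_weight (j : nat) : V :=
  let c := cycfix s in let k := tcount s Peak in let v := tcount s Valley in
  let a := tcount s DAsc in let d := tcount s DDesc in let f := tcount s Fixed in
  if j == n then F c k v a d f.+1
  else if j == n.+1 then F c k v a d.+1 f
  else if S j == j then F c.+1 k.+1 v.+1 a d f.-1
  else if S j < j then (if P j < j then F c k v a.+1 d f else F c k.+1 v.+1 a d.-1 f)
  else (if S (S j) < S j then F c k v a d.+1 f else F c k.+1 v.+1 a.-1 d f).

Lemma statw_ins (j : 'I_n.+1) : statw F (ins s j) = ins_weight (ins_pos n j).
Proof.
set k := ins_pos n j.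
have k_range : 1 <= k <= n.+1.
  by rewrite /k /ins_pos; case: ifP => H1; [|case: ifP => H2]; lia.
have fix_le := fixstar_le_cycstar s; rewrite fixstar_tcount /tcount in fix_le.
rewrite /statw /ins_weight /cycfix !fixstar_tcount cycstar_ins // -/k !tcount_ins -/k.
case: (eqVneq k n) => [Ekn|Nkn].
  by rewrite !(nctype'_new_fixed n_gt0 star_PK star_SK star_S_le star_P_le star_S0 k_range Ekn);
    congr F; rewrite /tcount; lia.
case: (eqVneq k n.+1) => [Ekn|Nkn1].
  by rewrite !(nctype'_after_last n_gt0 star_PK star_SK star_S_le star_P_le star_S0 k_range Ekn);
    congr F; rewrite /tcount; lia.
have k_mid : 1 <= k < n by lia.
have H := nctype'_inner n_gt0 star_PK star_SK star_S_le star_P_le star_S0 k_range k_mid.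
have H0 := H Peak; have H1 := H Valley; have H2 := H DAsc.
have H3 := H DDesc; have H4 := H Fixed.
case: (eqVneq (S k) k) => [Ef|Nf].
  have [E1 E2] := cty_insert_fixed n_gt0 star_PK star_SK star_S_le star_P_le star_S0 k_range k_mid Ef.
  by rewrite E1 E2 /= in H0 H1 H2 H3 H4; congr F; rewrite /tcount; lia.
case: (ltnP (S k) k) => Hd.
  have [E1 E2 E3] := cty_insert_desc n_gt0 star_PK star_SK star_S_le star_P_le star_S0 k_range k_mid Hd.
  have [Hp|Hp] := boolP (P k < k); rewrite ?Hp ?(negbTE Hp) in E2 E3;
    rewrite E1 E2 E3 /= in H0 H1 H2 H3 H4; congr F; rewrite /tcount; lia.
have Ha : k < S k by rewrite ltn_neqAle eq_sym Nf.
have [E1 _ _ E4 E5] :=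
  cty_insert_asc n_gt0 star_PK star_SK star_S_le star_P_le star_S0 k_range k_mid Ha.
have [Hp|Hp] := boolP (S (S k) < S k); rewrite ?Hp ?(negbTE Hp) in E4 E5;
  rewrite E1 E4 E5 /= in H0 H1 H2 H3 H4; congr F; rewrite /tcount; lia.
Qed.

End Weight.

Lemma sum_nat_pred (G : nat -> nat) :
  \sum_(0 <= j < n.+1) G j = \sum_(0 <= b < n.+1) G (P b).
Proof.
have le_n (i : 'I_n.+1) : i <= n by rewrite -ltnS.
have P_lt (i : 'I_n.+1) : P i < n.+1 by rewrite ltnS star_P_le.
rewrite !big_mkord.
have P_inj : injective (fun i : 'I_n.+1 => (inord (P i) : 'I_n.+1)).
  move=> i i' /(congr1 val) /=; rewrite !inordK // => /(congr1 S).
  by rewrite !star_PK ?le_n // => /val_inj.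
by rewrite (reindex_inj P_inj) /=; apply: eq_bigr => i _; rewrite inordK.
Qed.

Lemma sum_asc_succ (h : nat -> bool) :
  \sum_(1 <= j < n) ((j < S j) && h (S j)) = \sum_(1 <= b < n) ((P b < b) && h b).
Proof.
rewrite -(@sum_nat_cond_range n.+1) // -[RHS](@sum_nat_cond_range n.+1) //.
rewrite sum_nat_pred; apply: eq_big_nat => b Hb; rewrite star_PK; last by lia.
case: (ltnP b n) => Hbn; last first.
  have -> : b = n by lia.
  by rewrite (P_n n_gt0 star_PK star_SK star_S_le star_P_le star_S0) ltnn andbF.
case: (posnP b) => [->|Hb0]; first by rewrite ltn0 /=; case: (1 <= P 0); rewrite andbF.
have := P_gt0 n_gt0 star_PK star_SK star_S_le star_P_le star_S0 Hbn.
by case: (ltnP (P b) b) => H1 H2 /=; rewrite ?andbF // (_ : 1 <= P b < n) //; lia.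
Qed.

Section WeightSum.
Variables (V : comNzSemiRingType) (F : nat -> nat -> nat -> nat -> nat -> nat -> V).
Local Open Scope ring_scope.

Lemma ins_weight_inner j : (1 <= j < n)%N ->
  let c := cycfix s in let k := tcount s Peak in let v := tcount s Valley in
  let a := tcount s DAsc in let d := tcount s DDesc in let f := tcount s Fixed in
  ins_weight F j = F c.+1 k.+1 v.+1 a d f.-1 *+ (ctype (P j) j (S j) == Fixed)%N
    + F c k v a.+1 d f *+ (ctype (P j) j (S j) == Peak)%N
    + F c k.+1 v.+1 a d.-1 f *+ (ctype (P j) j (S j) == DDesc)%N
    + F c k v a d.+1 f *+ ((j < S j) && (ctype (P (S j)) (S j) (S (S j)) == Peak))%N
    + F c k.+1 v.+1 a.-1 d f *+ ((j < S j) && (ctype (P (S j)) (S j) (S (S j)) == DAsc))%N.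
Proof.
move=> Hj c k v a d f; rewrite /ins_weight (_ : (j == n) = false); last by lia.
rewrite (_ : (j == n.+1) = false) /ctype; last by lia.
case: (eqVneq (S j) j) => [->|NE].
  by rewrite ltnn eqxx /= ?mulr1n ?mulr0n ?addr0.
case: (ltnP (S j) j) => H1.
  rewrite (_ : (j < S j)%N = false); last by lia.
  by case: (ltnP (P j) j) => H2; rewrite /= ?mulr1n ?mulr0n ?addr0 ?add0r.
rewrite star_SK; last by lia.
rewrite (_ : (j < S j)%N); last by lia.
rewrite (_ : (S (S j) == S j) = false); last first.
  apply/negP => /eqP E; have := star_S_le (i := j).
  by have := star_SK (i := S j); rewrite E star_SK; lia.
by case: (ltnP (S (S j)) (S j)) => H2; case: (P j < j)%N;
  rewrite /= ?mulr1n ?mulr0n ?addr0 ?add0r.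
Qed.

Lemma sum_statw_ins : \sum_(j < n.+1) statw F (ins s j) =
  ins_op F (cycfix s) (tcount s Peak) (tcount s Valley) (tcount s DAsc)
    (tcount s DDesc) (tcount s Fixed).
Proof.
transitivity (\sum_(0 <= j < n.+1) ins_weight F (ins_pos n j)).
  by rewrite big_mkord; apply: eq_bigr => j _; rewrite statw_ins.
have split_last (G : nat -> V) : \sum_(0 <= x < n) G x = \sum_(0 <= x < n.-1) G x + G n.-1.
  by rewrite -big_nat_recr // prednK.
rewrite big_nat_recr //= split_last.
have -> : ins_pos n n = n.
  rewrite /ins_pos (_ : (n < n.-1)%N = false); last by lia.
  by rewrite (_ : (n == n.-1) = false) //; lia.
have -> : ins_pos n n.-1 = n.+1 by rewrite /ins_pos ltnn eqxx.
rewrite {2 3}/ins_weight eqxx (_ : (n.+1 == n) = false) ?eqxx; last by lia.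
rewrite (@eq_big_nat _ _ _ 0 n.-1 _ (fun x => ins_weight F x.+1)); last first.
  by move=> x Hx; rewrite /ins_pos (_ : (x < n.-1)%N); last by lia.
rewrite -(big_add1 _ _ 0 n xpredT (ins_weight F)) (eq_big_nat _ _ (@ins_weight_inner)).
rewrite !big_split /= !sumrMnr.
have asc_peak : (\sum_(1 <= j < n) ((j < S j) && (ctype (P (S j)) (S j) (S (S j)) == Peak)))%N
    = tcount s Peak.
  rewrite (sum_asc_succ (fun b => ctype (P b) b (S b) == Peak)); apply: eq_big_nat => b _.
  by rewrite ctype_peak; case: (P b < b)%N.
have asc_dasc : (\sum_(1 <= j < n) ((j < S j) && (ctype (P (S j)) (S j) (S (S j)) == DAsc)))%N
    = tcount s DAsc.
  rewrite (sum_asc_succ (fun b => ctype (P b) b (S b) == DAsc)); apply: eq_big_nat => b _.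
  by rewrite /ctype; case: (P b < b)%N; case: ifP => //; case: ifP.
rewrite asc_peak asc_dasc /ins_op -/(tcount s Peak) -/(tcount s DDesc) -/(tcount s Fixed).
ring.
Qed.

End WeightSum.
End InsertionRecurrence.

Lemma ins_inj n : 0 < n -> injective (fun p : 'S_n * 'I_n.+1 => ins p.1 p.2).
Proof.
move=> n0 [s j] [s' j'] /=; rewrite /ins -!mulgA => /mulgI E.
have Ej : j = j'.
  have := congr1 (fun p => pext p j) E; rewrite /= !pextM !pext_tperm eqxx /=.
  rewrite !pext_lift_perm /= eqxx.
  case: (eqVneq (j : nat) j') => [E1|Nj]; first by move=> _; apply: val_inj.
  have Hj := ltn_ord j; have Hj' := ltn_ord j'.
  case: (eqVneq (j : nat) n) => [E2|N2].
    have N3 : (j' == n :> nat) = false by lia.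
    have -> : unbump n j' = j' by rewrite unbumpE; case: ifP; lia.
    by have := pext_lt s' (x := j'); rewrite N3 bumpE; case: ifP; lia.
  have -> : unbump n j = j by rewrite unbumpE; case: ifP; lia.
  have N3 : (j == n :> nat) = false by lia.
  by have := pext_lt s' (x := j); rewrite N3 bumpE; case: ifP; lia.
subst j'; move/mulgI: E => E; congr (_, _); apply/permP => k.
have := congr1 (fun p : {perm 'I_n.+1} => p (lift ord_max k)) E.
by rewrite /= !lift_perm_lift; apply: lift_inj.
Qed.

Lemma sum_ins n (V : nmodType) (G : 'S_n.+1 -> V) : 0 < n ->
  (\sum_(s' : 'S_n.+1) G s' = \sum_(s : 'S_n) \sum_(j < n.+1) G (ins s j))%R.
Proof.
move=> n0; have ins_bij : bijective (fun p : 'S_n * 'I_n.+1 => ins p.1 p.2).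
  apply: inj_card_bij (ins_inj n0) _.
  by rewrite card_prod !card_Sn card_ord factS mulnC.
by rewrite (reindex _ (onW_bij _ ins_bij)) /= pair_bigA.
Qed.

Lemma sum_statw_succ n (V : comNzSemiRingType) F : 0 < n ->
  (\sum_(s' : 'S_n.+1) statw F s' =
   \sum_(s : 'S_n) ins_op F (cycfix s) (tcount s Peak) (tcount s Valley)
                     (tcount s DAsc) (tcount s DDesc) (tcount s Fixed) :> V)%R.
Proof. by move=> n0; rewrite sum_ins //; apply: eq_bigr => s _; apply: sum_statw_ins. Qed.

Local Open Scope ring_scope.

(** * A derivation commuting with the recurrence *)

Definition der_op (V : zmodType) (F : nat -> nat -> nat -> nat -> nat -> nat -> V)
  (c k v a d f : nat) : V :=
  F c k v a.-1 d f *+ a - F c k v a d.-1 f *+ d + F c k v a d f.-1 *+ f.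

Lemma ins_op_der_op (V : comNzRingType) (F : nat -> nat -> nat -> nat -> nat -> nat -> V)
    c k v a d f :
  ins_op (der_op F) c k v a d f = der_op (ins_op F) c k v a d f.
Proof.
rewrite /ins_op /der_op.
by case: a => [|a]; case: d => [|d]; case: f => [|f]; rewrite /= ?mulr0n; ring.
Qed.

Lemma tcount_S1 (s : 'S_1) T : tcount s T = 0%N.
Proof. by rewrite /tcount /nctype big_geq. Qed.

Lemma sum_statw_der_op n (V : comNzRingType) (G : nat -> nat -> nat -> nat -> nat -> nat -> V) :
  (0 < n)%N -> \sum_(s : 'S_n) statw (der_op G) s = 0.
Proof.
case: n => [//|n] _; elim: n G => [|n IH] G.
  by apply: big1 => s _; rewrite /statw !tcount_S1 /der_op !mulr0n subrr addr0.
rewrite sum_statw_succ // -[RHS](IH (ins_op G)); apply: eq_bigr => s _.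
by rewrite ins_op_der_op.
Qed.

(* Indicator of a failure of the invariants v = k and k + v + a + d + f = M;
   the recurrence maps its vanishing sum over 'S_n to a vanishing sum over
   'S_n.+1. *)
Definition bad_stats (M : nat) (c k v a d f : nat) : nat :=
  (v != k) || (k + v + a + d + f != M)%N.

Lemma ins_op_bad_stats m c k v a d f : v = k -> (k + v + a + d + f = m)%N ->
  ins_op (bad_stats m.+1) c k v a d f = 0%N.
Proof.
move=> -> sum_m; rewrite /ins_op /bad_stats.
case: a sum_m => [|a] sum_m; case: d sum_m => [|d] sum_m; case: f sum_m => [|f] sum_m;
  rewrite /= ?eqxx /=;
  repeat match goal with |- context [(?x != ?y)] =>
    rewrite (_ : (x != y) = false); last by lia end;
  by rewrite /= ?mul0rn ?mulr0n.
Qed.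

Lemma sum_statw_bad_stats n : (0 < n)%N -> \sum_(s : 'S_n) statw (bad_stats n.-1) s = 0%N.
Proof.
case: n => [//|n] _; elim: n => [|n IH].
  by apply: big1 => s _; rewrite /statw !tcount_S1.
rewrite sum_statw_succ //=; apply: big1 => s _.
move/eqP: IH; rewrite sum_nat_eq0 => /forallP /(_ s) /=.
rewrite /statw /bad_stats; case: (eqVneq (tcount s Valley) (tcount s Peak)) => //= Hv.
set m := (_ + _ + _ + _ + _)%N; case: (eqVneq m n) => //= Hs _.
exact: ins_op_bad_stats.
Qed.

Lemma tcount_invariants n (s : 'S_n) : (0 < n)%N ->
  tcount s Valley = tcount s Peak /\
  (tcount s Peak + tcount s Valley + tcount s DAsc + tcount s DDesc + tcount s Fixed = n.-1)%N.
Proof.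
move=> n0; move/eqP: (sum_statw_bad_stats n0); rewrite sum_nat_eq0 => /forallP /(_ s) /=.
rewrite /statw /bad_stats; case: (eqVneq (tcount s Valley) (tcount s Peak)) => //= Hv.
by set m := (_ + _ + _ + _ + _)%N; case: (eqVneq m n.-1).
Qed.

(** * Invariance under shifting double ascents, double descents and fixed points *)

Lemma horner_deriv_eq0 (R : numDomainType) (p : {poly R}) : p^`() = 0 -> forall x, p.[x] = p.[0].
Proof.
move=> dp0 x; suff -> : p = (p`_0)%:P by rewrite !hornerC.
apply/polyP => i; rewrite coefC; case: i => [//|i] /=.
have := congr1 (fun u : {poly R} => u`_i) dp0; rewrite coef_deriv coef0 => /eqP.
by rewrite mulrn_eq0 /= => /eqP.
Qed.

Section Shift.
Variables (R : numDomainType) (q y z t s r : R).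

Definition shift_poly (c k v a d f : nat) : {poly R} :=
  (q ^+ c * y ^+ k * z ^+ v)%:P * ((t%:P + 'X) ^+ a * (s%:P - 'X) ^+ d * (r%:P + 'X) ^+ f).

Lemma deriv_shift_poly c k v a d f : (shift_poly c k v a d f)^`() = der_op shift_poly c k v a d f.
Proof.
rewrite /shift_poly /der_op deriv_mulC !derivM !deriv_exp !derivD derivN !derivC derivX.
ring.
Qed.

Lemma sum_statw_shift n (h : R) : (0 < n)%N ->
  \sum_(sg : 'S_n) statw (fun c k v a d f =>
      q ^+ c * y ^+ k * z ^+ v * ((t + h) ^+ a * (s - h) ^+ d * (r + h) ^+ f)) sg
  = \sum_(sg : 'S_n) statw (fun c k v a d f =>
      q ^+ c * y ^+ k * z ^+ v * (t ^+ a * s ^+ d * r ^+ f)) sg.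
Proof.
move=> n0; set Pi := \sum_(sg : 'S_n) statw shift_poly sg.
have dPi : Pi^`() = 0.
  rewrite /Pi raddf_sum /= -[RHS](sum_statw_der_op shift_poly n0).
  by apply: eq_bigr => sg _; rewrite /statw deriv_shift_poly.
have PiE x : Pi.[x] = \sum_(sg : 'S_n) statw (fun c k v a d f =>
    q ^+ c * y ^+ k * z ^+ v * ((t + x) ^+ a * (s - x) ^+ d * (r + x) ^+ f)) sg.
  by rewrite /Pi horner_sum; apply: eq_bigr => sg _; rewrite /statw /shift_poly !hornerE.
rewrite -PiE horner_deriv_eq0 // PiE; apply: eq_bigr => sg _.
by rewrite /statw !addr0 subr0.
Qed.

End Shift.

Lemma Pccx_statw (R : comNzRingType) n (q X T : R) : (0 < n)%N ->
  Pccx n q X T = \sum_(sg : 'S_n) statw (fun c k v a d f =>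
     q ^+ c * (X * T) ^+ k * 1 ^+ v * (T ^+ a * 1 ^+ d * T ^+ f)) sg.
Proof.
move=> n0; apply: eq_bigr => sg _; rewrite /statw cpkstar_tcount exc_tcount //.
have [-> _] := tcount_invariants sg n0.
rewrite !expr1n !exprD exprMn.
move: (cycfix sg) (tcount sg Peak) (tcount sg DAsc) (tcount sg Fixed) => c k a f; ring.
Qed.

Lemma Acf_Pccx (R : comNzRingType) n (q t : R) : Acf n q t = Pccx n q 1 t.
Proof. by apply: eq_bigr => sg _; rewrite expr1n mulr1. Qed.

(* Every peak is matched by a valley and k + v + a + d + f = n - 1, so the
   factor al ^+ n.-1 can be distributed as al^2 per peak-valley pair and al
   per remaining letter. *)
Lemma Pccx_rescale (R : comNzRingType) n (q al X T y t0 h : R) : (0 < n)%N ->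
  al * al * X * T = y -> al * T = t0 + h -> al = 1 - h ->
  al ^+ n.-1 * Pccx n q X T = \sum_(sg : 'S_n) statw (fun c k v a d f =>
     q ^+ c * y ^+ k * 1 ^+ v * ((t0 + h) ^+ a * (1 - h) ^+ d * (t0 + h) ^+ f)) sg.
Proof.
move=> n0 <- <- <-; rewrite Pccx_statw // mulr_sumr; apply: eq_bigr => sg _.
rewrite /statw; have [Hv <-] := tcount_invariants sg n0.
rewrite Hv !expr1n.
move: (cycfix sg) (tcount sg Peak) (tcount sg DAsc) (tcount sg DDesc) (tcount sg Fixed).
by move=> c k a d f; rewrite !exprD !exprMn; ring.
Qed.

Lemma Pccx_shift (R : numDomainType) n (q al X T x' t' : R) : (0 < n)%N ->
  al * T = t' + (1 - al) -> x' * t' = al * al * X * T ->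
  al ^+ n.-1 * Pccx n q X T = Pccx n q x' t'.
Proof.
move=> n0 alT xt.
rewrite (@Pccx_rescale _ _ _ _ _ _ (x' * t') t' (1 - al)) ?xt //; last first.
  by rewrite opprB addrC subrK.
by rewrite sum_statw_shift // Pccx_statw // xt.
Qed.

(** * The parameters u and v *)

Section UV.
Variables (R : numFieldType) (x t S : R).
Hypotheses (S2 : S ^+ 2 = (1 + t) ^+ 2 - 4%:R * x * t)
           (x_neq0 : x != 0) (x_neq1 : x != 1) (t_neq0 : t != 0).
Let U := 1 + t ^+ 2 - 2%:R * x * t - (1 - t) * S.
Let V := (1 + t) ^+ 2 - 2%:R * x * t - (1 + t) * S.
Let A := 2%:R * (1 - x) * t.
Let B := 2%:R * x * t.
Let u := U / A.
Let v := V / B.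

Let A_neq0 : A != 0.
Proof. by rewrite !mulf_neq0 ?pnatr_eq0 // subr_eq0 eq_sym. Qed.

Let B_neq0 : B != 0.
Proof. by rewrite !mulf_neq0 ?pnatr_eq0. Qed.

(* Both identities hold as polynomial identities in x, t, S modulo the relation
   [S2]; the explicit cofactors are the quotients by S ^+ 2 - (1 + t) ^+ 2 + 4xt. *)
Lemma uv_sum : u + v = t * (1 + u * v).
Proof.
have key : U * B + V * A = t * (A * B + U * V).
  apply/eqP; rewrite -subr_eq0; apply/eqP.
  transitivity ((- t + t ^+ 3) * (S ^+ 2 - ((1 + t) ^+ 2 - 4%:R * x * t))).
    by rewrite /U /V /A /B; ring.
  by rewrite S2 subrr mulr0.
have -> : u + v = (U * B + V * A) / (A * B) by rewrite /u /v; field; rewrite A_neq0 B_neq0.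
by rewrite key /u /v; field; rewrite A_neq0 B_neq0.
Qed.

Lemma uv_square : (1 + u) ^+ 2 * v = x * t * (1 + u * v) ^+ 2.
Proof.
have key : (A + U) ^+ 2 * V * B = x * t * (A * B + U * V) ^+ 2.
  apply/eqP; rewrite -subr_eq0; apply/eqP.
  transitivity ((- x*t + 2%:R*x*t*S - x*t*S^+2 - 6%:R*x*t^+2 + 6%:R*x*t^+2*S
    - 9%:R*x*t^+3 - 2%:R*x*t^+3*S + 2%:R*x*t^+3*S^+2 - 4%:R*x*t^+4
    - 6%:R*x*t^+4*S + x*t^+5 - x*t^+5*S^+2 + 2%:R*x*t^+6 + x*t^+7
    + 8%:R*x^+2*t^+2 - 8%:R*x^+2*t^+2*S + 24%:R*x^+2*t^+3 + 4%:R*x^+2*t^+4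
    + 8%:R*x^+2*t^+4*S - 4%:R*x^+2*t^+6 - 16%:R*x^+3*t^+3)
    * (S ^+ 2 - ((1 + t) ^+ 2 - 4%:R * x * t))).
    by rewrite /U /V /A /B; ring.
  by rewrite S2 subrr mulr0.
have -> : (1 + u) ^+ 2 * v = (A + U) ^+ 2 * V * B / (A ^+ 2 * B ^+ 2).
  by rewrite /u /v; field; rewrite A_neq0 B_neq0.
by rewrite key /u /v; field; rewrite A_neq0 B_neq0.
Qed.

End UV.

Theorem theorem3p5 (R : rcfType) (n : nat) (n_ge1 : (1 <= n)%N) :
  (forall q x t : R, 1 + x != 0 -> x + t != 0 -> 1 + x * t != 0 ->
     Acf n q t =
     ((1 + x * t) / (1 + x)) ^+ n.-1 *
     Pccx n q ((1 + x) ^+ 2 * t / ((x + t) * (1 + x * t))) ((x + t) / (1 + x * t)))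
  /\
  (forall q x t : R, 0 <= (1 + t) ^+ 2 - 4%:R * x * t -> x != 0 -> x != 1 -> t != 0 ->
     let u := (1 + t ^+ 2 - 2%:R * x * t - (1 - t) * Num.sqrt ((1 + t) ^+ 2 - 4%:R * x * t))
              / (2%:R * (1 - x) * t) in
     let v := ((1 + t) ^+ 2 - 2%:R * x * t - (1 + t) * Num.sqrt ((1 + t) ^+ 2 - 4%:R * x * t))
              / (2%:R * x * t) in
     1 + u * v != 0 ->
     Pccx n q x t = ((1 + u) / (1 + u * v)) ^+ n.-1 * Acf n q v).
Proof.
split=> [q x t x1_neq0 xt_neq0 x1t_neq0 | q x t D_ge0 x_neq0 x_neq1 t_neq0 u v uv_neq0].
  by rewrite Acf_Pccx (@Pccx_shift _ _ _ _ _ _ 1 t n_ge1) //;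
    field; rewrite ?x1_neq0 ?xt_neq0 ?x1t_neq0.
have S2 := sqr_sqrtr D_ge0.
have sum_uv : u + v = t * (1 + u * v) := uv_sum S2 x_neq0 x_neq1 t_neq0.
have square_uv : (1 + u) ^+ 2 * v = x * t * (1 + u * v) ^+ 2 :=
  uv_square S2 x_neq0 x_neq1 t_neq0.
rewrite Acf_Pccx (@Pccx_shift _ _ _ _ _ _ x t n_ge1) //; apply/eqP; rewrite -subr_eq0; apply/eqP.
- transitivity ((u + v - t * (1 + u * v)) / (1 + u * v)); first by field.
  by rewrite sum_uv subrr mul0r.
- transitivity ((x * t * (1 + u * v) ^+ 2 - (1 + u) ^+ 2 * v) / (1 + u * v) ^+ 2).
    by field.
  by rewrite square_uv subrr mul0r.
Qed.
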